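(* Let $X,Z\in\mathbb{R}^{n\times r}$, let $\mathbf{e}=\mathrm{vec}(XX^{T}-ZZ^{T})\in\mathbb{R}^{n^{2}}$ and let $\mathbf{J}\in\mathbb{R}^{n^{2}\times nr}$ be the matrix satisfying $\mathbf{J}\,\mathrm{vec}(Y)=\mathrm{vec}(XY^{T}+YX^{T})$ for all $Y\in\mathbb{R}^{n\times r}$. If $\mathbf{J}^{\dagger}\mathbf{e}=0$, then either $XX^{T}=ZZ^{T}$ or $\sigma_{r}(X)=0$.
   Context: $\mathrm{vec}$ is the column-stacking vectorization, $\mathbf{J}^{\dagger}$ the Moore–Penrose pseudoinverse, and $\sigma_{r}(X)$ the $r$-th largest singular value of $X$. *)

From HB Require Import structures.
From mathcomp Require Import all_boot all_order all_algebra.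
From mathcomp Require Import boolp classical_sets reals.
Set Implicit Arguments. Unset Strict Implicit. Unset Printing Implicit Defensive.
Import Order.TTheory GRing.Theory Num.Theory.
Local Open Scope ring_scope.

Section Defs.
Variable R : realType.

(* column-stacking vectorization: vec A = [A_{.,1}; A_{.,2}; ...].
   mathcomp's mxvec is row-major, so column-stacking of A is the row-major
   stacking of A^T, transposed into a column vector. *)
Definition vec m n (A : 'M[R]_(m, n)) : 'cV[R]_(n * m) := (mxvec A^T)^T.

Definition is_pinv m k (A : 'M[R]_(m, k)) (P : 'M[R]_(k, m)) : Prop :=
  [/\ A *m P *m A = A, P *m A *m P = P,
      (A *m P)^T = A *m P & (P *m A)^T = P *m A].

(* Moore--Penrose pseudoinverse: the (unique) matrix satisfying the Penrose
   conditions. *)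
Definition pinv m k (A : 'M[R]_(m, k)) : 'M[R]_(k, m) :=
  xget 0 [set P | is_pinv A P].

(* s is the list of singular values of X (n x r), in nonincreasing order:
   the nonnegative square roots of the r eigenvalues (with multiplicity) of
   X^T X. *)
Definition is_sing_vals n r (X : 'M[R]_(n, r)) (s : seq R) : Prop :=
  [/\ size s = r, sorted (fun a b => b <= a) s, all (fun x => 0 <= x) s &
      char_poly (X^T *m X) = \prod_(x <- s) ('X - (x ^+ 2)%:P)].

Definition sing_vals n r (X : 'M[R]_(n, r)) : seq R :=
  xget [::] [set s | is_sing_vals X s].

(* sigma X k = k-th largest singular value (1-indexed). *)
Definition sigma n r (X : 'M[R]_(n, r)) (k : nat) : R :=
  nth 0 (sing_vals X) k.-1.

End Defs.

From HB Require Import structures.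
From mathcomp Require Import all_boot all_order all_algebra.
From mathcomp Require Import boolp classical_sets reals.
Import Order.TTheory GRing.Theory Num.Theory.
Set Implicit Arguments. Unset Strict Implicit.
Local Open Scope ring_scope.

(* By the Penrose conditions, J^+ e = 0 forces J^T e = 0, i.e. E := XX^T - ZZ^T
   is orthogonal to every XY^T + YX^T.  Taking Y = EX gives 2 tr(EX (EX)^T) = 0,
   hence EX = 0, i.e. XX^T X = ZZ^T X.  If sigma_r(X) <> 0 then G := X^T X is
   invertible; K := Z^T X satisfies K^T K = G^2, so K is invertible,
   V := G K^-1 is orthogonal and Z = XV, whence ZZ^T = XX^T. *)

Lemma mxtrace_mulmx_tr (R : pzRingType) m n (A B : 'M[R]_(m, n)) :
  \tr (A *m B^T) = \sum_i \sum_j A i j * B i j.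
Proof.
by apply: eq_bigr => i _; rewrite mxE; apply: eq_bigr => j _; rewrite mxE.
Qed.

Lemma mxtrace_mulmx_tr_eq0 (R : realDomainType) m n (A : 'M[R]_(m, n)) :
  \tr (A *m A^T) = 0 -> A = 0.
Proof.
rewrite mxtrace_mulmx_tr => /psumr_eq0P rows0; apply/matrixP => i j.
have row0 : \sum_j A i j * A i j = 0.
  by apply: rows0 => // k _; apply: sumr_ge0 => l _; rewrite -expr2 sqr_ge0.
have /(_ j isT)/eqP := psumr_eq0P (fun l _ => sqr_ge0 (A i l)) row0.
by rewrite mulf_eq0 orbb mxE => /eqP.
Qed.

Lemma mxvec_mul_tr (R : pzRingType) m n (A B : 'M[R]_(m, n)) :
  mxvec A *m (mxvec B)^T = (\sum_i \sum_j A i j * B i j)%:M.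
Proof.
rewrite [LHS]mx11_scalar mxE; congr _%:M.
rewrite (reindex (uncurry (@mxvec_index m n))) /=; last first.
  by have [g h1 h2] := @curry_mxvec_bij m n; exists g => x _; [apply: h1 | apply: h2].
rewrite pair_big /=; apply: eq_bigr => -[i j] _.
by rewrite [_^T _ _]mxE !mxvecE.
Qed.

Lemma trmx_vec_mul_vec (R : realType) m n (A B : 'M[R]_(m, n)) :
  (vec A)^T *m vec B = (\tr (A *m B^T))%:M.
Proof.
rewrite /vec trmxK mxvec_mul_tr mxtrace_mulmx_tr exchange_big /=.
by congr _%:M; apply: eq_bigr => j _; apply: eq_bigr => i _; rewrite !mxE.
Qed.

Lemma gram_unitmx (R : realFieldType) m n (M : 'M[R]_(m, n)) :
  row_free M -> M *m M^T \in unitmx.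
Proof.
move=> freeM; rewrite -row_free_unit; apply: inj_row_free => v vMM0.
apply: (row_free_inj freeM); rewrite mul0mx; apply: mxtrace_mulmx_tr_eq0.
by rewrite trmx_mul mulmxA -(mulmxA v) vMM0 mul0mx linear0.
Qed.

Lemma is_pinv_rank_factor (R : realType) m p k (B : 'M[R]_(m, p)) (C : 'M[R]_(p, k)) :
  B^T *m B \in unitmx -> C *m C^T \in unitmx ->
  is_pinv (B *m C) (C^T *m invmx (C *m C^T) *m invmx (B^T *m B) *m B^T).
Proof.
move=> uB uC.
have symV q (S : 'M[R]_q) : S^T = S -> (invmx S)^T = invmx S.
  by move=> symS; rewrite trmx_inv symS.
have symB : (B^T *m B)^T = B^T *m B by rewrite trmx_mul trmxK.
have symC : (C *m C^T)^T = C *m C^T by rewrite trmx_mul trmxK.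
set P := _ *m B^T.
have AP : B *m C *m P = B *m invmx (B^T *m B) *m B^T.
  by rewrite /P -!mulmxA (mulmxA C) (mulmxA (C *m C^T)) mulmxV // mul1mx.
have PA : P *m (B *m C) = C^T *m invmx (C *m C^T) *m C.
  by rewrite /P !mulmxA -(mulmxA _ B^T) -(mulmxA _ (invmx _)) mulVmx // mulmx1.
rewrite /is_pinv AP PA; split.
- by rewrite -!mulmxA (mulmxA B^T) (mulmxA (invmx _)) mulVmx // mul1mx.
- by rewrite /P -!mulmxA (mulmxA C) (mulmxA (invmx (C *m C^T))) mulVmx // mul1mx.
- by rewrite !trmx_mul trmxK symV // -mulmxA.
- by rewrite !trmx_mul trmxK symV // -mulmxA.
Qed.

Lemma is_pinv_pinv (R : realType) m k (A : 'M[R]_(m, k)) : is_pinv A (pinv A).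
Proof.
apply: xgetPex; rewrite -(mulmx_base A).
have uC := gram_unitmx (row_base_free A).
have : row_free (col_base A)^T by rewrite /row_free mxrank_tr; apply: col_base_full.
move=> /gram_unitmx; rewrite trmxK => uB.
by eexists; apply: is_pinv_rank_factor uB uC.
Qed.

Lemma is_pinv_trmx_mul_eq0 (R : realType) m k (A : 'M[R]_(m, k)) P (v : 'cV_m) :
  is_pinv A P -> P *m v = 0 -> A^T *m v = 0.
Proof.
case=> APA _ symAP _ Pv0.
by rewrite -APA trmx_mul symAP -!mulmxA Pv0 !mulmx0.
Qed.

Lemma sym_lift_orth_mul_eq0 (R : realFieldType) n r (X : 'M[R]_(n, r)) (E : 'M[R]_n) :
  E^T = E -> (forall Y, \tr ((X *m Y^T + Y *m X^T) *m E) = 0) -> E *m X = 0.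
Proof.
move=> symE orth; apply: mxtrace_mulmx_tr_eq0.
have /eqP := orth (E *m X).
rewrite mulmxDl mxtraceD mxtrace_mulC trmx_mul symE !mulmxA -mulr2n.
by rewrite mulrn_eq0 /= => /eqP.
Qed.

Lemma gram_eq_of_mul_eq (R : comUnitRingType) n r (X Z : 'M[R]_(n, r)) :
  X^T *m X \in unitmx -> X *m X^T *m X = Z *m Z^T *m X -> X *m X^T = Z *m Z^T.
Proof.
set G := X^T *m X => uG; rewrite -!mulmxA -/G => XGZK.
set K := Z^T *m X.
have symG : G^T = G by rewrite trmx_mul trmxK.
have KtK : K^T *m K = G *m G by rewrite trmx_mul trmxK -mulmxA -XGZK mulmxA.
have uK : K \in unitmx.
  by move: (unitmx_mul K^T K); rewrite KtK unitmx_mul uG => /esym/andP[].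
set V := G *m invmx K.
have ZXV : Z = X *m V by rewrite mulmxA XGZK -mulmxA mulmxV ?mulmx1.
have VtV : V^T *m V = 1%:M.
  rewrite trmx_mul symG mulmxA -(mulmxA _ G G) -KtK !mulmxA -trmx_mul.
  by rewrite mulmxV // trmx1 mul1mx mulmxV.
by rewrite ZXV trmx_mul mulmxA -(mulmxA X) (mulmx1C VtV) mulmx1.
Qed.

Lemma sorted_ge_last_le d (T : porderType d) (x0 x : T) (s : seq T) :
  sorted >=%O s -> x \in s -> (nth x0 s (size s).-1 <= x)%O.
Proof.
move=> sorted_s sx; have s_gt0 : (0 < size s)%N by case: s sx sorted_s.
rewrite -[x in (_ <= x)%O](nth_index x0 sx).
apply: (sorted_leq_nth ge_trans ge_refl) => //=.
- by rewrite inE /= index_mem.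
- by rewrite inE /= prednK.
- by rewrite -ltnS prednK // index_mem.
Qed.

Lemma sing_vals_last_eq0 (R : realType) n r (X : 'M[R]_(n, r)) s :
  is_sing_vals X s -> \det (X^T *m X) = 0 -> s`_r.-1 = 0.
Proof.
case=> size_s sorted_s s_ge0 charX detX0.
have [x sx x0] : exists2 x, x \in s & x = 0.
  have := char_poly_det (X^T *m X).
  rewrite detX0 mulr0 -horner_coef0 charX horner_prod => /eqP.
  rewrite prodf_seq_eq0 => /hasP[x sx]; rewrite hornerXsubC sub0r oppr_eq0.
  by rewrite sqrf_eq0 => /eqP x0; exists x.
have s_gt0 : (0 < size s)%N by case: s sx {size_s sorted_s s_ge0 charX}.
apply/eqP; rewrite eq_le -size_s -{2}x0 sorted_ge_last_le //=.
by apply: (allP s_ge0); rewrite mem_nth // prednK.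
Qed.

Lemma sigma_unitmx (R : realType) n r (X : 'M[R]_(n, r)) :
  sigma X r != 0 -> X^T *m X \in unitmx.
Proof.
rewrite unitmxE unitfE /sigma /sing_vals; apply: contraNN => /eqP detX0.
case: (pselect (exists s, is_sing_vals X s)) => [ex | nex].
  by rewrite (sing_vals_last_eq0 (xgetPex [::] ex)).
by rewrite xgetPN ?nth_nil // => s sv; apply: nex; exists s.
Qed.

Theorem lemma12 (R : realType) (n r : nat) (X Z : 'M[R]_(n, r))
    (J : 'M[R]_(n * n, r * n)) :
  (forall Y : 'M[R]_(n, r), J *m vec Y = vec (X *m Y^T + Y *m X^T)) ->
  pinv J *m vec (X *m X^T - Z *m Z^T) = 0 ->
  X *m X^T = Z *m Z^T \/ sigma X r = 0.
Proof.
move=> hJ; set E := _ - _ => /(is_pinv_trmx_mul_eq0 (is_pinv_pinv J)) JtE.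
have symE : E^T = E by rewrite linearB /= !trmx_mul !trmxK.
have orth Y : \tr ((X *m Y^T + Y *m X^T) *m E) = 0.
  have := trmx_vec_mul_vec (X *m Y^T + Y *m X^T) E.
  rewrite symE -hJ trmx_mul -mulmxA JtE mulmx0 => /matrixP/(_ 0 0).
  by rewrite !mxE eqxx mulr1n => <-.
have /eqP := sym_lift_orth_mul_eq0 symE orth.
rewrite mulmxBl subr_eq0 => /eqP XXZ.
have [-> | sigma_neq0] := eqVneq (sigma X r) 0; [by right | left].
exact: gram_eq_of_mul_eq (sigma_unitmx sigma_neq0) XXZ.
Qed.
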